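(* If a regular facets-pairing structure $\mathcal{F}$ on the cube $\mathcal{C}^n$ is perfect, then $\mathcal{F}$ is strong.
   Context: Let $[\pm n]=\{\pm1,\dots,\pm n\}$ and $\mathcal{C}^n=\{x\in\mathbb{R}^n: -\tfrac14\le x_i\le\tfrac14\}$. For $1\le i\le n$, $\mathbf{F}(i)$ and $\mathbf{F}(-i)$ denote the facets of $\mathcal{C}^n$ in $\{x_i=\tfrac14\}$ and $\{x_i=-\tfrac14\}$; for $j_1,\dots,j_s\in[\pm n]$ with distinct absolute values, $\mathbf{F}(j_1,\dots,j_s)=\bigcap_i\mathbf{F}(j_i)$ (every proper face has this form). A signed permutation is a bijection $\sigma$ of $[\pm n]$ with $\sigma(-k)=-\sigma(k)$. A facets-pairing structure on $\mathcal{C}^n$ is a pair $(\omega,\{\tau_j\})$ where $\omega$ is a bijection of $[\pm n]$ with $\omega\circ\omega=\mathrm{id}$ and $\tau_j:\mathbf{F}(j)\to\mathbf{F}(\omega(j))$ are face-preserving homeomorphisms with $\tau_{\omega(j)}=\tau_j^{-1}$, such that for all $|j|\ne|k|$, writing $\tau_j(\mathbf{F}(j,k))=\mathbf{F}(\omega(j),k')$ and $\tau_k(\mathbf{F}(j,k))=\mathbf{F}(j',\omega(k))$, one has $\tau_{k'}\tau_j(p)=\tau_{j'}\tau_k(p)$ for all $p\in\mathbf{F}(j,k)$. It is regular if each $\tau_j$ is a Euclidean isometry and $\omega$ is a signed permutation. A composition $\tau_{k_m}\circ\dots\circ\tau_{k_1}$ applied to a proper face $f$ is valid if $f\subset\mathbf{F}(k_1)$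 and $\tau_{k_i}\circ\dots\circ\tau_{k_1}(f)\subset\mathbf{F}(k_{i+1})$ for $1\le i<m$ ($m=0$ allowed, giving the identity). The face family $\widehat f$ is the set of faces $\tau_{k_m}\circ\dots\circ\tau_{k_1}(f)$ over all valid compositions. $\mathcal{F}$ is perfect if for every proper face $f$ of codimension $s$, $\widehat f$ has exactly $2^s$ elements. For a proper face $f$ let $\Xi(f)$ be the set of facets containing $f$. If $f\subset\mathbf{F}(k)$ and $f'=\tau_k(f)$, define the bijection $\Psi^f_k:\Xi(f)\to\Xi(f')$ by $\Psi^f_k(\mathbf{F}(k))=\mathbf{F}(\omega(k))$ and, for $F'\in\Xi(f)\setminus\{\mathbf{F}(k)\}$, $\Psi^f_k(F')$ is the facet $G$ with $G\cap\mathbf{F}(\omega(k))=\tau_k(F'\cap\mathbf{F}(k))$. $\mathcal{F}$ is strong if for every proper face $f$ and any two valid compositions $\tau_{k_m}\circ\dots\circ\tau_{k_1}$ and $\tau_{k'_r}\circ\dots\circ\tau_{k'_1}$ mapping $f$ onto the same face $\widetilde f$: (a) they agree at every point of $f$; and (b) the composites $\Psi^{f_m}_{k_m}\circ\dots\circ\Psi^{f_1}_{k_1}$ and $\Psi^{f'_r}_{k'_r}\circ\dots\circ\Psi^{f'_1}_{k'_1}$ coincide as maps $\Xi(f)\to\Xi(\widetilde f)$, where $f_1=f'_1=f$, $f_{i+1}=\tau_{k_i}\circ\dots\circ\tau_{k_1}(f)$, $f'_{i+1}=\tau_{k'_i}\circ\dots\circ\tau_{k'_1}(f)$. *)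

(* Points of R^n are row vectors 'rV[R]_n over an arbitrary
   real field R (the paper's R^n is the instance R = reals). *)
From HB Require Import structures.
From mathcomp Require Import all_boot all_order all_algebra.
Set Implicit Arguments. Unset Strict Implicit. Unset Printing Implicit Defensive.
Import Order.TTheory GRing.Theory Num.Theory.
Local Open Scope ring_scope.

Section Cube.
Variables (R : realFieldType) (n : nat).

(* signed indices [±n]: (i, true) stands for +(i+1), (i, false) for -(i+1) *)
Definition sidx := ('I_n * bool)%type.
Definition point := 'rV[R]_n.
Definition negs (j : sidx) : sidx := (j.1, ~~ j.2).
Definition quarter : R := (4%:R)^-1.
Definition sgnval (j : sidx) : R := if j.2 then quarter else - quarter.

Definition cube (x : point) : Prop := forall i : 'I_n, - quarter <= x ord0 i <= quarter.
Definition facet (j : sidx) (x : point) : Prop := cube x /\ x ord0 j.1 = sgnval j.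
(* a label {j_1,...,j_s}, s >= 1, with distinct absolute values: a proper face *)
Definition valid_label (S : {set sidx}) : Prop :=
  S != set0 /\ forall a b, a \in S -> b \in S -> a.1 = b.1 -> a = b.
Definition face (S : {set sidx}) (x : point) : Prop :=
  cube x /\ forall j, j \in S -> x ord0 j.1 = sgnval j.

Definition seteq (P Q : point -> Prop) : Prop := forall x, P x <-> Q x.
Definition subsetP (P Q : point -> Prop) : Prop := forall x, P x -> Q x.
Definition image (f : point -> point) (P : point -> Prop) (y : point) : Prop :=
  exists x, P x /\ y = f x.
Definition dist2 (x y : point) : R := \sum_(i < n) (x ord0 i - y ord0 i) ^+ 2.

Section Structure.
Variables (omega : sidx -> sidx) (tau : sidx -> point -> point).

Definition facets_pairing : Prop :=
  (forall j, omega (omega j) = j)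
  /\ (forall j x, facet j x -> facet (omega j) (tau j x))
  /\ (forall j x, facet j x -> tau (omega j) (tau j x) = x)
  (* tau_j is continuous on F(j) (its inverse tau_{omega j} likewise): homeomorphism *)
  /\ (forall j x, facet j x -> forall e : R, 0 < e -> exists2 d : R, 0 < d &
        forall y, facet j y -> dist2 x y < d -> dist2 (tau j x) (tau j y) < e)
  /\ (forall j S, valid_label S -> subsetP (face S) (facet j) ->
        exists2 T, valid_label T & seteq (image (tau j) (face S)) (face T))
  /\ (forall j k k' j', j.1 != k.1 -> (omega j).1 != k'.1 -> j'.1 != (omega k).1 ->
        seteq (image (tau j) (face [set j; k])) (face [set omega j; k']) ->
        seteq (image (tau k) (face [set j; k])) (face [set j'; omega k]) ->
        forall p, face [set j; k] p -> tau k' (tau j p) = tau j' (tau k p)).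

Definition regular : Prop :=
  (forall j x y, facet j x -> facet j y -> dist2 (tau j x) (tau j y) = dist2 x y)
  /\ bijective omega /\ (forall k, omega (negs k) = negs (omega k)).

(* valid composition tau_{k_m} o ... o tau_{k_1} (ks = [k_1; ...; k_m]) on P *)
Fixpoint valid_comp (ks : seq sidx) (P : point -> Prop) : Prop :=
  match ks with
  | [::] => True
  | k :: ks' => subsetP P (facet k) /\ valid_comp ks' (image (tau k) P)
  end.
Definition img_comp (ks : seq sidx) (P : point -> Prop) : point -> Prop :=
  foldl (fun Q k => image (tau k) Q) P ks.
Definition apply_comp (ks : seq sidx) (x : point) : point :=
  foldl (fun y k => tau k y) x ks.

(* the face family of F(S), as labels *)
Definition in_family (S T : {set sidx}) : Prop :=
  valid_label T /\
  exists ks, valid_comp ks (face S) /\ seteq (img_comp ks (face S)) (face T).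

Definition perfect : Prop :=
  forall S, valid_label S ->
    exists A : {set {set sidx}},
      (forall T, T \in A <-> in_family S T) /\ #|A| = (2 ^ #|S|)%N.

(* Psi_k(F(j)) = F(g); facets are identified with their signed index *)
Definition Psi (k j g : sidx) : Prop :=
  if j == k then g = omega k
  else seteq (fun x => facet g x /\ facet (omega k) x)
             (image (tau k) (face [set j; k])).

Fixpoint PsiPath (ks : seq sidx) (j g : sidx) : Prop :=
  match ks with
  | [::] => j = g
  | k :: ks' => exists g1, Psi k j g1 /\ PsiPath ks' g1 g
  end.

Definition strong : Prop :=
  forall S T ks ks', valid_label S -> valid_label T ->
    valid_comp ks (face S) -> valid_comp ks' (face S) ->
    seteq (img_comp ks (face S)) (face T) ->
    seteq (img_comp ks' (face S)) (face T) ->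
    (forall x, face S x -> apply_comp ks x = apply_comp ks' x) /\
    (forall j g, j \in S -> (PsiPath ks j g <-> PsiPath ks' j g)).

End Structure.
End Cube.

(* A valid composition applied to F(S) is a word in the letters of S:
   each step applies tau at the current image of one of the facets F(m), m in S, containing the
   face, and these facets are carried along by Psi.  The cycle condition makes the letters
   commute, both on points and on facet labels, and each letter is an involution, so the outcome
   of a word depends only on the set of letters occurring in it an odd number of times.  The
   2^|S| subsets of S thus parametrize the face family of F(S); perfectness says this
   parametrization is injective, so two compositions reaching the same face have the same odd
   letters and therefore act identically. *)

From Pilot Require Import Defs.
From HB Require Import structures.
From mathcomp Require Import all_boot all_order all_algebra.
From Stdlib Require Import ClassicalEpsilon.
Set Implicit Arguments. Unset Strict Implicit. Unset Printing Implicit Defensive.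
Import Order.TTheory GRing.Theory Num.Theory.
Local Open Scope ring_scope.

Notation psub := Defs.subsetP.
Notation img := Defs.image.

Section Faces.
Variables (R : realFieldType) (n : nat).
Implicit Types (S T U : {set sidx n}) (j k : sidx n) (x : point R n).
Local Notation face := (@face R n).
Local Notation facet := (@facet R n).

Lemma quarter_gt0 : 0 < quarter R.
Proof. by rewrite invr_gt0 ltr0n. Qed.

Lemma sgnval_neq0 j : sgnval R j != 0.
Proof.
by rewrite /sgnval; case: j.2; rewrite ?oppr_eq0 gt_eqF ?quarter_gt0.
Qed.

Lemma sgnval_neqN j : sgnval R j != - sgnval R j.
Proof.
by rewrite -subr_eq0 opprK -mulr2n mulrn_eq0 negb_or sgnval_neq0.
Qed.

Lemma sgnval_opp j k : j.1 = k.1 -> j != k -> sgnval R j = - sgnval R k.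
Proof.
case: j k => [i b] [i' b'] /= <-; rewrite /sgnval /=.
by case: b b' => [] [] //=; rewrite ?opprK // eqxx.
Qed.

Lemma sgnval_in_cube j : - quarter R <= sgnval R j <= quarter R.
Proof.
have q_ge0 := ltW quarter_gt0.
by rewrite /sgnval; case: j.2; rewrite lexx ?andbT // ?lerNl ?opprK ?(le_trans _ q_ge0) ?oppr_le0.
Qed.

Definition face_center T : point R n :=
  \row_i if [pick t in T | t.1 == i] is Some t then sgnval R t else 0.

Lemma face_center_in T : valid_label T -> face T (face_center T).
Proof.
move=> [_ T_lab]; split=> [i|j jT]; rewrite mxE; case: pickP => [t|noT].
- by rewrite sgnval_in_cube.
- by rewrite oppr_le0 ltW ?quarter_gt0.
- by case/andP=> tT /eqP t_j; rewrite (T_lab t j).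
- by move: (noT j); rewrite jT eqxx.
Qed.

Lemma face_label_sub T U : valid_label T -> psub (face T) (face U) -> U \subset T.
Proof.
move=> vT TU; apply/subsetP => u uU; apply/negPn/negP => uT.
have [_ /(_ u uU)] := TU _ (face_center_in vT).
rewrite mxE; case: pickP => [t /andP[tT /eqP t_u]|_].
  have tu : t != u by apply: contraNneq uT => <-.
  by rewrite (sgnval_opp t_u tu) => /eqP; rewrite eq_sym (negPf (sgnval_neqN _)).
by move/esym/eqP; rewrite (negPf (sgnval_neq0 _)).
Qed.

Lemma face_inj T U : valid_label T -> valid_label U -> seteq (face T) (face U) -> T = U.
Proof.
move=> vT vU TU; apply/eqP; rewrite eqEsubset.
by rewrite (face_label_sub vU) ?(face_label_sub vT) // => x /TU.
Qed.

Lemma face_label_valid T x : face T x -> T != set0 -> valid_label T.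
Proof.
move=> [_ Tx] T0; split=> // a b aT bT ab; case: (eqVneq a b) => // neq.
have := Tx a aT; rewrite ab Tx // (sgnval_opp ab neq) => /eqP.
by rewrite (negPf (sgnval_neqN _)).
Qed.

Lemma face_sub T U : U \subset T -> psub (face T) (face U).
Proof. by move=> /subsetP UT x [cx Tx]; split=> // j /UT; apply: Tx. Qed.

Lemma facet_face1 j : seteq (facet j) (face [set j]).
Proof.
move=> x; split=> [[cx jx]|[cx jx]]; split=> //; last by rewrite jx ?set11.
by move=> k /set1P ->.
Qed.

Lemma facet_face2 j k x : (facet j x /\ facet k x) <-> face [set j; k] x.
Proof.
split=> [[[cx jx] [_ kx]]|[cx jkx]]; first by split=> // l /set2P[]->.
by split; split; rewrite // jkx ?set21 ?set22.
Qed.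

Lemma face_facet S k : k \in S -> psub (face S) (facet k).
Proof. by move=> kS x /(@face_sub _ [set k]); rewrite sub1set => /(_ kS) /facet_face1. Qed.

Lemma facet_face_mem S k : valid_label S -> psub (face S) (facet k) -> k \in S.
Proof. by move=> vS Sk; rewrite -sub1set (face_label_sub vS) // => x /Sk /facet_face1. Qed.

Lemma valid_label1 j : valid_label [set j].
Proof. by split=> [|a b /set1P-> /set1P->]; first by apply/set0Pn; exists j; rewrite set11. Qed.

Lemma valid_label2 j k : j.1 != k.1 -> valid_label [set j; k].
Proof.
move=> jk; split=> [|a b]; first by apply/set0Pn; exists j; rewrite set21.
by move=> /set2P[]-> /set2P[]-> // eq1; rewrite eq1 eqxx in jk.
Qed.

Lemma valid_labelS S T : valid_label S -> T \subset S -> T != set0 -> valid_label T.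
Proof. by move=> [_ vS] /subsetP TS T0; split=> // a b /TS aS /TS; apply: vS. Qed.

Lemma valid_label_neq1 S j k : valid_label S -> j \in S -> k \in S -> j != k -> j.1 != k.1.
Proof. by move=> [_ vS] jS kS; apply: contra_neq; apply: vS. Qed.

Lemma valid_label_cases S j k : valid_label S -> j \in S -> k \in S -> j = k \/ j.1 != k.1.
Proof. by move=> vS jS kS; case: (eqVneq j k) => [|/(valid_label_neq1 vS jS kS)]; [left|right]. Qed.

Lemma image_seteq (f : point R n -> point R n) P Q : seteq P Q -> seteq (img f P) (img f Q).
Proof. by move=> PQ y; split=> -[x [/PQ Px ->]]; exists x. Qed.

Lemma image_sub (f : point R n -> point R n) P Q : psub P Q -> psub (img f P) (img f Q).
Proof. by move=> PQ y [x [/PQ Qx ->]]; exists x. Qed.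

Lemma image_comp_eq (f g f' g' : point R n -> point R n) P :
  (forall x, P x -> f (g x) = f' (g' x)) -> seteq (img f (img g P)) (img f' (img g' P)).
Proof.
move=> E y; split=> -[_ [[x [Px ->]] ->]]; first by exists (g' x); split; [exists x | rewrite E].
by exists (g x); split; [exists x | rewrite E].
Qed.

End Faces.

Section CommutingInvolutions.
Variables (A : finType) (St : Type) (step : A -> St -> St) (Inv : St -> Prop) (P : {pred A}).
Hypotheses (stepI : forall a s, P a -> Inv s -> Inv (step a s))
  (stepK : forall a s, P a -> Inv s -> step a (step a s) = s)
  (stepC : forall a b s, P a -> P b -> Inv s -> step a (step b s) = step b (step a s)).

Definition act (w : seq A) (s : St) : St := foldl (fun s a => step a s) s w.

Lemma act_inv w s : all P w -> Inv s -> Inv (act w s).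
Proof. by elim: w s => //= a w IHw s /andP[Pa Pw] Is; apply: IHw => //; apply: stepI. Qed.

Lemma act_pull u a v s : all P (u ++ a :: v) -> Inv s -> act (u ++ a :: v) s = act (a :: u ++ v) s.
Proof.
elim: u s => //= b u IHu s; rewrite all_cat /= => /and3P[Pb Pu /andP[Pa Pv]] Is.
rewrite IHu /=; last exact: stepI; last by rewrite all_cat Pu /= Pa Pv.
by rewrite stepC.
Qed.

Lemma act_perm w w' s : all P w -> perm_eq w w' -> Inv s -> act w s = act w' s.
Proof.
elim: w w' s => [|a w IHw] w' s; first by rewrite perm_sym => _ /perm_nilP ->.
move=> /= /andP[Pa Pw] ww' Is.
have : a \in w' by rewrite -(perm_mem ww') mem_head.
move: ww' => /[swap] /splitPr[u v] ww'.
have Puv : all P (u ++ a :: v) by rewrite -(perm_all _ ww') /= Pa.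
rewrite act_pull //=; apply: IHw; last exact: stepI; first by [].
by rewrite -(perm_cons a); apply: (perm_trans ww'); rewrite perm_catC /= perm_cons perm_catC.
Qed.

Definition odd_letters (w : seq A) : {set A} := [set a | odd (count_mem a w)].

Lemma odd_letters_cons a w :
  odd_letters (a :: w) = if a \in odd_letters w then odd_letters w :\ a else a |: odd_letters w.
Proof.
by rewrite [a \in _]inE; case: ifP => odd_a; apply/setP => b; rewrite !inE;
  case: (eqVneq b a) => [->|ba]; rewrite /= ?eqxx oddD ?odd_a // eq_sym (negPf ba).
Qed.

Lemma mem_odd_letters a w : a \in odd_letters w -> a \in w.
Proof. by rewrite inE -has_pred1 has_count => /odd_gt0. Qed.

Lemma act_cons_enum a (X : {set A}) s : P a -> {subset X <= P} -> Inv s ->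
  act (a :: enum X) s = act (enum (if a \in X then X :\ a else a |: X)) s.
Proof.
move=> Pa XP Is; have PX (Y : {set A}) : {subset Y <= P} -> all P (enum Y).
  by move=> YP; apply/allP => b; rewrite mem_enum => /YP.
have PXa : {subset X :\ a <= P} by move=> b /setD1P[_ /XP].
have PaX : {subset a |: X <= P} by move=> b /setU1P[->|/XP].
case: ifP => aX.
  have XaX : perm_eq (enum X) (a :: enum (X :\ a)).
    apply: uniq_perm; rewrite /= ?enum_uniq ?mem_enum ?setD11 // => b.
    by rewrite in_cons !mem_enum in_setD1; case: (eqVneq b a) => [->|].
  by rewrite (act_perm (w' := [:: a, a & enum (X :\ a)])) ?perm_cons //= ?Pa ?PX ?stepK.
apply: act_perm; rewrite /= ?Pa ?PX //.
apply: uniq_perm; rewrite /= ?enum_uniq ?mem_enum ?aX // => b.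
by rewrite in_cons !mem_enum in_setU1.
Qed.

Lemma act_odd_letters w s : all P w -> Inv s -> act w s = act (enum (odd_letters w)) s.
Proof.
elim: w s => [|a w IHw] s; first by rewrite /odd_letters (eq_enum (in_set _)) enum0.
move=> /= /andP[Pa Pw] Is; rewrite IHw //; last exact: stepI.
change (act (a :: enum (odd_letters w)) s = act (enum (odd_letters (a :: w))) s).
rewrite act_cons_enum ?odd_letters_cons // => b /mem_odd_letters; exact: (allP Pw).
Qed.

End CommutingInvolutions.

Section FacetsPairing.
Variables (R : realFieldType) (n : nat).
Variables (omega : sidx n -> sidx n) (tau : sidx n -> point R n -> point R n).
Hypothesis FP : facets_pairing omega tau.
Implicit Types (S T L : {set sidx n}) (j k m g : sidx n) (x : point R n).
Local Notation face := (@face R n).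
Local Notation facet := (@facet R n).
Local Notation Psi := (@Psi R n omega tau).

Lemma omegaK : involutive omega.
Proof. by case: FP => H _; apply: H. Qed.

Lemma tau_facet j x : facet j x -> facet (omega j) (tau j x).
Proof. by case: FP => _ [H _]; apply: H. Qed.

Lemma tauK j x : facet j x -> tau (omega j) (tau j x) = x.
Proof. by case: FP => _ [_ [H _]]; apply: H. Qed.

Lemma tau_face S j : valid_label S -> psub (face S) (facet j) ->
  exists2 T, valid_label T & seteq (img (tau j) (face S)) (face T).
Proof. by case: FP => _ [_ [_ [_ [H _]]]]; apply: H. Qed.

Lemma tau_cycle j k k' j' : j.1 != k.1 -> (omega j).1 != k'.1 -> j'.1 != (omega k).1 ->
  seteq (img (tau j) (face [set j; k])) (face [set omega j; k']) ->
  seteq (img (tau k) (face [set j; k])) (face [set j'; omega k]) ->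
  forall x, face [set j; k] x -> tau k' (tau j x) = tau j' (tau k x).
Proof. by case: FP => _ [_ [_ [_ [_ H]]]]; apply: H. Qed.

Lemma image_tau_facet k P : psub P (facet k) -> psub (img (tau k) P) (facet (omega k)).
Proof. by move=> Pk y [x [/Pk kx ->]]; apply: tau_facet. Qed.

Lemma image_tauK k P : psub P (facet k) -> seteq (img (tau (omega k)) (img (tau k) P)) P.
Proof.
move=> Pk y; split=> [[_ [[x [Px ->]] ->]]|Py]; first by rewrite tauK //; apply: Pk.
by exists (tau k y); split; [exists y | rewrite tauK //; apply: Pk].
Qed.

Lemma facet_image_tau k : psub (facet k) (img (tau (omega k)) (facet (omega k))).
Proof. by move=> y ky; exists (tau k y); split; [apply: tau_facet | rewrite tauK]. Qed.

Lemma image_tau_face S k : valid_label S -> k \in S ->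
  exists T, [/\ valid_label T, omega k \in T, seteq (img (tau k) (face S)) (face T) &
    seteq (img (tau (omega k)) (face T)) (face S)].
Proof.
move=> vS kS; have Sk : psub (face S) (facet k) := face_facet kS; have [T vT ST] := tau_face vS Sk.
exists T; split=> //; first by apply: facet_face_mem vT _ => x /ST; apply: image_tau_facet.
move=> x; have := image_tauK Sk x; have := image_seteq (tau (omega k)) (fun y => iff_sym (ST y)) x.
tauto.
Qed.

Lemma image_tau_facet_label k L : valid_label L ->
  seteq (img (tau k) (face [set k])) (face L) -> L \subset [set omega k].
Proof.
move=> vL kL; apply: face_label_sub (valid_label1 _) _ => x /facet_face1 okx.
have [y [ky ->]] := facet_image_tau okx; rewrite omegaK in ky *.
by apply/kL; exists y; split=> //; apply/facet_face1.
Qed.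

Lemma image_tau_face2 k m : m.1 != k.1 -> exists g, g.1 != (omega k).1 /\
  seteq (img (tau k) (face [set m; k])) (face [set omega k; g]).
Proof.
move=> mk; have vmk := valid_label2 mk.
have [T [vT okT _ Tk]] := image_tau_face vmk (set22 m k).
have [g gT g_ok] : exists2 g, g \in T & g != omega k.
  apply/exists_inP; apply: contraTT mk => /exists_inPn Tok.
  have T1 : T = [set omega k] by apply/setP => x; rewrite inE; apply/idP/eqP => [/Tok/negPn/eqP|->].
  rewrite T1 in Tk; have := image_tau_facet_label vmk Tk.
  by rewrite omegaK subUset !sub1set !inE => /andP[/eqP-> _]; rewrite eqxx.
have g1 : g.1 != (omega k).1 by apply: valid_label_neq1 vT gT okT g_ok.
have [U [vU kU e3 e4]] := image_tau_face (valid_label2 g1) (set22 g (omega k)).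
rewrite omegaK in kU e4.
have TU : psub (face T) (face [set g; omega k]) by apply: face_sub; rewrite subUset !sub1set okT gT.
have Umk : U \subset [set m; k] by apply: face_label_sub vmk _ => x /Tk /(image_sub TU) /e3.
exists g; split=> //; suff -> : [set m; k] = U by rewrite setUC.
apply/eqP; rewrite eq_sym eqEsubset Umk subUset !sub1set kU andbT.
apply: contraTT mk => mU; have U1 : U = [set k].
  apply/eqP; rewrite eqEsubset sub1set kU andbT; apply/subsetP => x xU.
  by move/subsetP: Umk => /(_ x xU) /set2P[xm|/set1P->//]; rewrite -xm xU in mU.
rewrite U1 in e4; have := image_tau_facet_label (valid_label2 g1) e4.
by rewrite subUset !sub1set !inE eqxx andbT => /eqP gk; rewrite gk eqxx in g_ok.
Qed.

Lemma Psi_char k m g : m.1 != k.1 -> Psi k m g <->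
  g.1 != (omega k).1 /\ seteq (img (tau k) (face [set m; k])) (face [set omega k; g]).
Proof.
move=> mk; have /negPf mk' : m != k by apply: contraNneq mk => ->.
rewrite /Psi mk'; split=> [Pg | [_ e] x]; last first.
  split=> [/facet_face2|/e]; first by rewrite setUC => /e.
  by rewrite setUC => /facet_face2.
have [g0 [g01 e0]] := image_tau_face2 mk.
have e1 : seteq (face [set g; omega k]) (face [set omega k; g0]).
  by move=> x; split=> [/facet_face2/Pg/e0|/e0/Pg/facet_face2].
have v0 : valid_label [set omega k; g0] by apply: valid_label2; rewrite eq_sym.
have vg : valid_label [set g; omega k].
  apply: (face_label_valid (x := face_center R [set omega k; g0])).
    by apply/e1/face_center_in.
  by apply/set0Pn; exists g; rewrite set21.
have /set2P[g0g|g0k] : g0 \in [set g; omega k] by rewrite (face_inj vg v0 e1) set22.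
  by rewrite -g0g.
by rewrite g0k eqxx in g01.
Qed.

Lemma Psi_uniq k m g g' : m.1 != k.1 -> Psi k m g -> Psi k m g' -> g = g'.
Proof.
move=> mk /(Psi_char _ mk) [g1 e] /(Psi_char _ mk) [g1' e'].
have vg : valid_label [set omega k; g] by apply: valid_label2; rewrite eq_sym.
have vg' : valid_label [set omega k; g'] by apply: valid_label2; rewrite eq_sym.
have /set2P[gk|//] : g \in [set omega k; g'].
  by rewrite -(face_inj (R := R) vg vg') ?set22 // => x; split=> [/e/e'|/e'/e].
by rewrite gk eqxx in g1.
Qed.

(* [psi k m] labels the facet Psi_k(F(m)); it is a junk value unless [m = k] or [m.1 != k.1]. *)
Definition psi k m : sidx n := epsilon (inhabits m) (Psi k m).

Lemma Psi_psi k m g : m = k \/ m.1 != k.1 -> Psi k m g <-> g = psi k m.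
Proof.
case=> [->|mk].
  have : Psi k k (psi k k) by apply: epsilon_spec; exists (omega k); rewrite /Psi eqxx.
  by rewrite /Psi eqxx => ->.
have Ppsi : Psi k m (psi k m).
  by apply: epsilon_spec; have [g0 ?] := image_tau_face2 mk; exists g0; apply/Psi_char.
by split=> [Pg|->//]; apply: Psi_uniq mk Pg Ppsi.
Qed.

Lemma psi_self k : psi k k = omega k.
Proof. by symmetry; apply/Psi_psi; [left | rewrite /Psi eqxx]. Qed.

Lemma psi_spec k m : m.1 != k.1 -> (psi k m).1 != (omega k).1 /\
  seteq (img (tau k) (face [set m; k])) (face [set omega k; psi k m]).
Proof. by move=> mk; apply/(Psi_char _ mk)/(Psi_psi _ (or_intror mk)). Qed.

Lemma psiK k m : m = k \/ m.1 != k.1 -> psi (omega k) (psi k m) = m.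
Proof.
case=> [->|mk]; first by rewrite !psi_self omegaK.
have [psi1 e] := psi_spec mk; symmetry; apply/Psi_psi; first by right.
apply/Psi_char => //; rewrite omegaK; split=> // x.
have mkk : psub (face [set m; k]) (facet k) by apply: face_facet; rewrite set22.
have := image_tauK mkk x; have := image_seteq (tau (omega k)) e x.
by rewrite (setUC [set psi k m]) (setUC [set k]); tauto.
Qed.

Lemma image_tau_face_psi L k : valid_label L -> k \in L ->
  [/\ valid_label (psi k @: L), {in L &, injective (psi k)} &
       seteq (img (tau k) (face L)) (face (psi k @: L))].
Proof.
move=> vL kL; have [T [vT okT e1 e2]] := image_tau_face vL kL.
have inj : {in L &, injective (psi k)}.
  move=> a b aL bL ab.
  by rewrite -(psiK (valid_label_cases vL aL kL)) ab (psiK (valid_label_cases vL bL kL)).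
suff -> : psi k @: L = T by [].
apply/eqP; rewrite eqEsubset; apply/andP; split; apply/subsetP.
  move=> _ /imsetP[m mL ->]; case: (valid_label_cases vL mL kL) => [->|mk].
    by rewrite psi_self.
  have [_ e] := psi_spec mk; suff : [set omega k; psi k m] \subset T.
    by rewrite subUset !sub1set => /andP[].
  apply: face_label_sub vT _ => x /e1; rewrite -e; apply: image_sub.
  by apply: face_sub; rewrite subUset !sub1set mL.
move=> t tT; case: (eqVneq t (omega k)) => [->|tk]; first by rewrite -psi_self imset_f.
have t1 : t.1 != (omega k).1 := valid_label_neq1 vT tT okT tk.
have [_ e] := psi_spec t1; rewrite omegaK in e.
have : [set k; psi (omega k) t] \subset L.
  apply: face_label_sub vL _ => x /e2; rewrite -e; apply: image_sub.
  by apply: face_sub; rewrite subUset !sub1set tT.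
rewrite subUset !sub1set => /andP[_ mL]; apply/imsetP; exists (psi (omega k) t) => //.
by have := psiK (or_intror t1); rewrite omegaK => ->.
Qed.

Lemma tau_psi_comm j k x : j.1 != k.1 -> face [set j; k] x ->
  tau (psi k j) (tau k x) = tau (psi j k) (tau j x).
Proof.
move=> jk jkx; have kj : k.1 != j.1 by rewrite eq_sym.
have [jk1 e_jk] := psi_spec jk; have [kj1 e_kj] := psi_spec kj.
apply: (tau_cycle (j := k) (k := j)) => //; first by rewrite eq_sym.
- by move=> y; rewrite setUC; apply: e_jk.
- by move=> y; rewrite (setUC [set psi j k]); apply: e_kj.
- by rewrite setUC.
Qed.

Lemma psi_cross_neq j k : j.1 != k.1 -> psi k j != psi j k.
Proof.
move=> jk; apply/eqP => psi_eq; have kj : k.1 != j.1 by rewrite eq_sym.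
have [jk1 e_jk] := psi_spec jk; have [kj1 e_kj] := psi_spec kj.
have tau_jk x : face [set j; k] x -> tau k x = tau j x.
  move=> jkx; have kx : facet (psi k j) (tau k x).
    have : face [set omega k; psi k j] (tau k x) by apply/e_jk; exists x.
    by case/facet_face2 => _.
  have jx : facet (psi k j) (tau j x).
    have : face [set omega j; psi j k] (tau j x) by apply/e_kj; exists x; rewrite setUC.
    by rewrite -psi_eq => /facet_face2[_].
  by rewrite -(tauK kx) -(tauK jx) (tau_psi_comm jk jkx) psi_eq.
have vk : valid_label [set omega k; psi k j] by apply: valid_label2; rewrite eq_sym.
have vj : valid_label [set omega j; psi j k] by apply: valid_label2; rewrite eq_sym.
have e : seteq (face [set omega k; psi k j]) (face [set omega j; psi j k]).
  move=> y; split=> [/e_jk [x [jkx ->]]|/e_kj [x [kjx ->]]].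
    by apply/e_kj; exists x; rewrite setUC tau_jk.
  by apply/e_jk; exists x; rewrite setUC in kjx; rewrite tau_jk.
have /set2P[/(can_inj omegaK) kj_eq|ok_psi] : omega k \in [set omega j; psi j k].
- by rewrite -(face_inj vk vj e) set21.
- by rewrite kj_eq eqxx in jk.
by rewrite ok_psi -psi_eq eqxx in jk1.
Qed.

Lemma psi2_inj M j k : valid_label M -> j \in M -> k \in M ->
  {in M &, injective (fun e => psi (psi k j) (psi k e))}.
Proof.
move=> vM jM kM; have [vk inj_k _] := image_tau_face_psi vM kM.
have [_ inj_kj _] := image_tau_face_psi vk (imset_f (psi k) jM).
by move=> a b aM bM /inj_kj ab; apply: inj_k => //; apply: ab; apply: imset_f.
Qed.

Lemma psi2_imset_comm M j k : valid_label M -> j \in M -> k \in M -> j != k ->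
  [set psi (psi k j) (psi k e) | e in M] = [set psi (psi j k) (psi j e) | e in M].
Proof.
move=> vM jM kM jk; have jk1 := valid_label_neq1 vM jM kM jk.
have [vk _ e_k] := image_tau_face_psi vM kM.
have [vkj _ e_kj] := image_tau_face_psi vk (imset_f (psi k) jM).
have [vj _ e_j] := image_tau_face_psi vM jM.
have [vjk _ e_jk] := image_tau_face_psi vj (imset_f (psi j) kM).
rewrite !imset_comp; apply: face_inj => // x.
have Mjk : psub (face M) (face [set j; k]) by apply: face_sub; rewrite subUset !sub1set jM.
have := image_comp_eq (P := face M) (fun y My => tau_psi_comm jk1 (Mjk y My)) x.
have := image_seteq (tau (psi k j)) e_k x; have := image_seteq (tau (psi j k)) e_j x.
have := e_kj x; have := e_jk x; tauto.
Qed.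

Lemma psi2_comm M j k e : valid_label M -> j \in M -> k \in M -> e \in M ->
  psi (psi k j) (psi k e) = psi (psi j k) (psi j e).
Proof.
move=> vM jM kM eM; case: (eqVneq j k) => [->//|jk].
set fk := fun e => psi (psi k j) (psi k e); set fj := fun e => psi (psi j k) (psi j e).
have jk1 := valid_label_neq1 vM jM kM jk.
have v2 := valid_label2 jk1.
have fkj : fk j = fj j.
  have : fk j \in fj @: [set j; k].
    by rewrite -psi2_imset_comm ?set21 ?set22 //; apply/imsetP; exists j; rewrite ?set21.
  case/imsetP => _ /set2P[]-> //; rewrite /fk /fj !psi_self => /(can_inj omegaK) psi_eq.
  by move: (psi_cross_neq jk1); rewrite psi_eq eqxx.
have fkk : fk k = fj k.
  have : fk k \in fj @: [set j; k].
    by rewrite -psi2_imset_comm ?set21 ?set22 //; apply/imsetP; exists k; rewrite ?set22.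
  have inj := psi2_inj v2 (set21 j k) (set22 j k).
  case/imsetP => _ /set2P[]-> // /esym; rewrite -fkj.
  by move/(inj _ _ (set21 j k) (set22 j k))/eqP; rewrite (negPf jk).
have jke : [set j; k; e] \subset M by rewrite !subUset !sub1set jM kM.
have v3 : valid_label [set j; k; e].
  by apply: valid_labelS vM jke _; apply/set0Pn; exists j; rewrite !inE eqxx.
have [j3 k3 e3] : [/\ j \in [set j; k; e], k \in [set j; k; e] & e \in [set j; k; e]].
  by rewrite !inE !eqxx !orbT.
have : fk e \in fj @: [set j; k; e].
  by rewrite -psi2_imset_comm //; apply/imsetP; exists e.
have inj := psi2_inj v3 j3 k3.
case/imsetP => e' /setUP[/set2P[]|/set1P]-> // fk_e.
  by rewrite (inj _ _ e3 j3 (etrans fk_e (esym fkj))).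
by rewrite (inj _ _ e3 k3 (etrans fk_e (esym fkk))).
Qed.

Section Moves.
Variable S : {set sidx n}.

(* A state carries a point together with the current labels of the images of the facets F(m),
   m in S. *)
Definition state := ({ffun sidx n -> sidx n} * point R n)%type.

Definition move_labels a (d : {ffun sidx n -> sidx n}) : {ffun sidx n -> sidx n} :=
  [ffun m => if m \in S then psi (d a) (d m) else d m].

Definition move a (s : state) : state := (move_labels a s.1, tau (s.1 a) s.2).

Definition state_ok (s : state) := valid_label (s.1 @: S) /\ face (s.1 @: S) s.2.

Lemma move_labels_imset a d : a \in S -> move_labels a d @: S = psi (d a) @: (d @: S).
Proof. by move=> aS; rewrite -imset_comp; apply: eq_in_imset => m mS; rewrite ffunE mS. Qed.

Lemma image_move a s P : a \in S -> state_ok s -> seteq P (face (s.1 @: S)) ->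
  [/\ state_ok (move a s), psub P (facet (s.1 a)) &
      seteq (img (tau (s.1 a)) P) (face ((move a s).1 @: S))].
Proof.
case: s => d x aS [vL Lx] /= PL; have aL : d a \in d @: S by apply: imset_f.
have [vL' _ e] := image_tau_face_psi vL aL; rewrite /state_ok /= move_labels_imset //.
split=> [||y]; first by split=> //; apply/e; exists x.
  by move=> y /PL; apply: face_facet.
by have := image_seteq (tau (d a)) PL y; have := e y; tauto.
Qed.

Lemma move_ok a s : a \in S -> state_ok s -> state_ok (move a s).
Proof. by move=> aS ok_s; have [] := image_move aS ok_s (fun y => iff_refl _). Qed.

Lemma moveK a s : a \in S -> state_ok s -> move a (move a s) = s.
Proof.
case: s => d x aS [vL Lx]; have aL : d a \in d @: S by apply: imset_f.
congr pair; last by rewrite /= ffunE aS psi_self tauK //; apply: face_facet aL _ Lx.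
apply/ffunP => m; rewrite !ffunE /= aS psi_self; case: ifP => mS; rewrite mS //.
by rewrite psiK //; apply: (valid_label_cases vL); apply: imset_f.
Qed.

Lemma moveC a b s : a \in S -> b \in S -> state_ok s -> move a (move b s) = move b (move a s).
Proof.
move=> aS bS ok_s; case: (eqVneq (s.1 a) (s.1 b)) => [dab|dab].
  have move_eq (t : state) : t.1 a = t.1 b -> move a t = move b t.
    by move=> tab; congr pair; rewrite ?tab //; apply/ffunP => m; rewrite !ffunE tab.
  rewrite -(move_eq s dab) -move_eq ?moveK // /= !ffunE aS bS.
  by rewrite dab.
case: s ok_s dab => d x [vL Lx] /= dab; have aL : d a \in d @: S by apply: imset_f.
have bL : d b \in d @: S by apply: imset_f.
rewrite /move /= !ffunE aS bS; congr pair.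
  apply/ffunP => m; rewrite !ffunE; case: ifP => mS; rewrite mS //.
  by rewrite aS bS; apply: psi2_comm vL aL bL _; apply: imset_f.
apply: tau_psi_comm; first exact: valid_label_neq1 vL aL bL dab.
by apply: face_sub Lx; rewrite subUset !sub1set aL.
Qed.

Lemma act_move_ok w s : all (mem S) w -> state_ok s -> state_ok (act move w s).
Proof. by apply: act_inv => *; apply: move_ok. Qed.

Lemma act_move_odd_letters w s : all (mem S) w -> state_ok s ->
  act move w s = act move (enum (odd_letters w)) s.
Proof. by apply: act_odd_letters => *; [apply: move_ok | apply: moveK | apply: moveC]. Qed.

Definition start x : state := ([ffun m => m], x).

Lemma start_labels : [ffun m => m] @: S = S.
Proof. by rewrite (eq_imset _ (ffunE _)) imset_id. Qed.

Lemma start_ok x : valid_label S -> face S x -> state_ok (start x).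
Proof. by rewrite /state_ok /= start_labels. Qed.

Fixpoint comp_of_word (w : seq (sidx n)) (d : {ffun sidx n -> sidx n}) : seq (sidx n) :=
  if w is a :: w' then d a :: comp_of_word w' (move_labels a d) else [::].

Lemma apply_comp_of_word w s : apply_comp tau (comp_of_word w s.1) s.2 = (act move w s).2.
Proof. by elim: w s => //= a w IHw [d x]; rewrite -IHw. Qed.

Lemma comp_of_word_valid w s P : all (mem S) w -> state_ok s -> seteq P (face (s.1 @: S)) ->
  valid_comp tau (comp_of_word w s.1) P /\
  seteq (img_comp tau (comp_of_word w s.1) P) (face ((act move w s).1 @: S)).
Proof.
elim: w s P => [|a w IHw] s P /=; first by [].
move=> /andP[aS Sw] ok_s PL; have [ok_as Pa e] := image_move aS ok_s PL.
by have [] := IHw (move a s) _ Sw ok_as e.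
Qed.

Lemma word_of_comp ks s P : state_ok s -> seteq P (face (s.1 @: S)) -> valid_comp tau ks P ->
  exists2 w, all (mem S) w & ks = comp_of_word w s.1.
Proof.
elim: ks s P => [|k ks IHks] s P ok_s PL /=; first by exists [::].
case=> Pk vc; have /imsetP[a aS ka] : k \in s.1 @: S.
  by apply: facet_face_mem (proj1 ok_s) _ => x /PL /Pk.
subst k.
have [ok_as _ e] := image_move aS ok_s PL.
by have [w Sw ->] := IHks _ _ ok_as e vc; exists (a :: w); rewrite /= ?aS.
Qed.

Lemma PsiPath_comp_of_word w s m g : all (mem S) w -> state_ok s -> m \in S ->
  PsiPath omega tau (comp_of_word w s.1) (s.1 m) g <-> g = (act move w s).1 m.
Proof.
elim: w s => [|a w IHw] s /=; first by split=> ->.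
move=> /andP[aS Sw] ok_s mS; have := IHw (move a s) Sw (move_ok aS ok_s) mS.
rewrite /= ffunE mS => IH; have [vL _] := ok_s.
have Psi_am g1 : Psi (s.1 a) (s.1 m) g1 <-> g1 = psi (s.1 a) (s.1 m).
  by apply: Psi_psi; apply: (valid_label_cases vL); apply: imset_f.
by split=> [[g1 [/Psi_am -> /IH]] | /IH Pg] //; exists (psi (s.1 a) (s.1 m)); rewrite Psi_am.
Qed.

End Moves.

Section FaceFamily.
Variable S : {set sidx n}.
Hypothesis vS : valid_label S.

(* Labels do not depend on the point they travel with: any point of F(S) would do here. *)
Definition family_label (X : {set sidx n}) : {set sidx n} :=
  (act (move S) (enum X) (start (face_center R S))).1 @: S.

Lemma odd_letters_sub w : all (mem S) w -> odd_letters w \subset S.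
Proof. by move=> Sw; apply/subsetP => a /mem_odd_letters; apply: (allP Sw). Qed.

Lemma comp_family_label ks T : valid_label T -> valid_comp tau ks (face S) ->
  seteq (img_comp tau ks (face S)) (face T) ->
  exists2 w, all (mem S) w & ks = comp_of_word S w [ffun m => m] /\
    T = family_label (odd_letters w).
Proof.
move=> vT vc e; have ok0 := start_ok vS (face_center_in R vS).
have start_face : seteq (face S) (face ((start (face_center R S)).1 @: S)).
  by rewrite /= start_labels.
have [w Sw ks_w] := word_of_comp ok0 start_face vc.
exists w => //; split=> //; have [_ e'] := comp_of_word_valid Sw ok0 start_face.
rewrite /family_label -act_move_odd_letters //; apply: face_inj vT _ _ => [|x].
  by have [] := act_move_ok Sw ok0.
by have := e x; have := e' x; rewrite ks_w; tauto.
Qed.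

Lemma in_family_label (X : {set sidx n}) : X \subset S -> in_family tau S (family_label X).
Proof.
move=> XS; have ok0 := start_ok vS (face_center_in R vS).
have SX : all (mem S) (enum X) by apply/allP => a; rewrite mem_enum => /(subsetP XS).
split; first by have [] := act_move_ok SX ok0.
exists (comp_of_word S (enum X) [ffun m => m]).
by apply: (comp_of_word_valid SX ok0); rewrite /= start_labels.
Qed.

Lemma family_label_inj : perfect tau -> {in powerset S &, injective family_label}.
Proof.
move=> perf; have [A [memA cardA]] := perf S vS.
have A_labels : A = family_label @: powerset S.
  apply/setP => T; apply/idP/imsetP => [/memA [vT [ks [vc e]]]|[X XS ->]].
    have [w Sw [_ ->]] := comp_family_label vT vc e.
    by exists (odd_letters w); rewrite // powersetE odd_letters_sub.
  by apply/memA; apply: in_family_label; rewrite -powersetE.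
by apply/imset_injP; rewrite -A_labels cardA card_powerset.
Qed.

End FaceFamily.

Lemma strong_of_perfect : perfect tau -> strong omega tau.
Proof.
move=> perf S T ks ks' vS vT vc vc' e e'.
have [w Sw [-> Tw]] := comp_family_label vS vT vc e.
have [w' Sw' [-> Tw']] := comp_family_label vS vT vc' e'.
have same_odd : odd_letters w = odd_letters w'.
  by apply: (family_label_inj vS perf); rewrite ?powersetE ?odd_letters_sub // -Tw -Tw'.
have same_act x : face S x -> act (move S) w (start x) = act (move S) w' (start x).
  move=> Sx; have ok := start_ok vS Sx.
  by rewrite act_move_odd_letters // same_odd -act_move_odd_letters.
split=> [x Sx | j g jS].
  by rewrite !(apply_comp_of_word _ _ (start x)) same_act.
have ok0 := start_ok vS (face_center_in R vS).
have := PsiPath_comp_of_word g Sw ok0 jS; have := PsiPath_comp_of_word g Sw' ok0 jS.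
by rewrite /= ffunE (same_act _ (face_center_in R vS)) => -> ->.
Qed.

End FacetsPairing.

Theorem mainTheorem4 (R : realFieldType) (n : nat)
  (omega : sidx n -> sidx n) (tau : sidx n -> point R n -> point R n) :
  facets_pairing omega tau -> regular omega tau -> perfect tau ->
  strong omega tau.
Proof. by move=> FP _; apply: strong_of_perfect. Qed.
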